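(* Let $G$ be any connected graph on $N\ge2$ vertices and, for $x\ge0$, let $$\rho_N(x)=\frac{\mathbb{1}+x|\psi_G\rangle\langle\psi_G|}{2^N+x}$$ be the maximally (globally) depolarized graph state. If $x\le 2$, equivalently if the fidelity $\langle\psi_G|\rho_N(x)|\psi_G\rangle=(1+x)/(2^N+x)$ is at most $3/(2^N+2)$, then $\rho_N(x)$ cannot be purified to $|\psi_G\rangle$ by any protocol.
   Context: Graph state $|\psi_G\rangle$: common $+1$ eigenstate of $K_i=X_i\prod_{\{i,j\}\in E_G}Z_j$ (equivalently $|+\rangle^{\otimes N}$ followed by controlled-phase gates along every edge). Purification: each qubit held by a distinct party holding that qubit from arbitrarily many copies; using SLOCC they must produce $|\psi_G\rangle$ with fidelity arbitrarily close to 1. Known input: a two-qubit Bell-diagonal state with weight $\lambda_{00}$ on the target Bell state is purifiable iff $\lambda_{00}>1/2$. *)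

From mathcomp Require Import all_boot all_order all_algebra.
Set Implicit Arguments. Unset Strict Implicit. Unset Printing Implicit Defensive.
Import Order.TTheory GRing.Theory Num.Theory.
Local Open Scope ring_scope.

(* Computational basis of N qubits: z : 'I_N -> bool.  Operators on N qubits
   are given by their matrix entries in this basis. *)
Definition config (N : nat) := {ffun 'I_N -> bool}.
Definition op (C : numClosedFieldType) (N : nat) := config N -> config N -> C.

(* Graph state |psi_G> = prod_{edges} CZ |+>^N :
   amplitude (-1)^(#edges {i,j} with z_i = z_j = 1) / sqrt(2^N).
   Edges are counted once via i < j. *)
Definition edge_count N (e : rel 'I_N) (z : config N) : nat :=
  #|[set p : 'I_N * 'I_N | [&& (p.1 < p.2)%N, e p.1 p.2, z p.1 & z p.2]]|.

Definition graph_state (C : numClosedFieldType) N (e : rel 'I_N) : config N -> C :=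
  fun z => (-1) ^+ edge_count e z / sqrtC (2 ^+ N).

Definition depolarized_graph_state (C : numClosedFieldType) N (e : rel 'I_N) (x : C)
  : op C N :=
  fun z z' => ((z == z')%:R + x * graph_state C e z * (graph_state C e z')^* )
              / (2 ^+ N + x).

(* n copies: party i holds qubit i of every copy, so a basis state of the
   n-copy system is S : 'I_N -> ('I_n -> bool); copy k is [ffun i => S i k]. *)
Definition copies_config (N n : nat) := {ffun 'I_N -> {ffun 'I_n -> bool}}.
Definition copy_k N n (S : copies_config N n) (k : 'I_n) : config N :=
  [ffun i => S i k].

Definition tensor_power (C : numClosedFieldType) N (rho : op C N) (n : nat)
  : copies_config N n -> copies_config N n -> C :=
  fun S S' => \prod_(k < n) rho (copy_k S k) (copy_k S' k).

(* SLOCC protocol on n copies: each party i applies a (single Kraus)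
   linear map A i : (C^2)^{(x) n} -> C^2, with matrix entries A i b s. *)
Definition local_ops (C : numClosedFieldType) (N n : nat) :=
  'I_N -> bool -> {ffun 'I_n -> bool} -> C.

(* Unnormalized output state (A_1 (x) ... (x) A_N) rho^{(x)n} (...)^dagger. *)
Definition slocc_output (C : numClosedFieldType) N (rho : op C N) (n : nat)
  (A : local_ops C N n) : op C N :=
  fun c c' => \sum_(S : copies_config N n) \sum_(S' : copies_config N n)
     (\prod_(i < N) A i (c i) (S i)) * tensor_power rho S S'
     * (\prod_(i < N) A i (c' i) (S' i))^*.

Definition trace_op (C : numClosedFieldType) N (sigma : op C N) : C :=
  \sum_(z : config N) sigma z z.

Definition overlap (C : numClosedFieldType) N (psi : config N -> C) (sigma : op C N) : C :=
  \sum_(z : config N) \sum_(z' : config N) (psi z)^* * sigma z z' * psi z'.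

(* rho is purifiable to psi: for every eps > 0 there are a number n of copies
   and local operators succeeding with nonzero probability whose normalized
   output has fidelity >= 1 - eps with psi. *)
Definition purifiable (C : numClosedFieldType) N (rho : op C N) (psi : config N -> C) : Prop :=
  forall eps : C, 0 < eps ->
    exists (n : nat) (A : local_ops C N n),
      0 < trace_op (slocc_output rho A) /\
      (1 - eps) * trace_op (slocc_output rho A) <= overlap psi (slocc_output rho A).

(* Partial transposition on one qubit i0 preserves positivity of the tensor powers of a
   state and of their images under local operations (the operator of the party holding
   i0 just gets complex-conjugated).  For x <= 2 the partial transpose of rho_N(x) is
   positive semidefinite.  On the other hand, if i0 has a neighbour in G then qubit i0 is
   maximally entangled with the rest in |psi_G>, so the partial transpose of
   |psi_G><psi_G| has spectrum in [-1/2, 1/2]; hence every state sigma with positive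
   partial transpose has <psi_G|sigma|psi_G> <= tr(sigma) / 2, and the fidelity of the
   protocol's output can never approach 1. *)

From mathcomp Require Import all_boot all_order all_algebra.
From mathcomp Require Import ring.
Set Implicit Arguments. Unset Strict Implicit. Unset Printing Implicit Defensive.
Import Order.TTheory GRing.Theory Num.Theory.
Local Open Scope ring_scope.

Section Kernels.

Variable C : numClosedFieldType.

Definition psd_kernel (X : finType) (K : X -> X -> C) : Prop :=
  exists (J : finType) (w : J -> C) (u : J -> X -> C),
    (forall j, 0 <= w j) /\ forall z z', K z z' = \sum_j w j * u j z * (u j z')^*.

Lemma sum_delta (X : finType) (z : X) (F : X -> C) : \sum_y (z == y)%:R * F y = F z.
Proof.
rewrite (bigD1 z) //= eqxx mul1r big1 ?addr0 // => y /negbTE.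
by rewrite eq_sym => ->; rewrite mul0r.
Qed.

Lemma eq_psd_kernel (X : finType) (K1 K2 : X -> X -> C) :
  K1 =2 K2 -> psd_kernel K2 -> psd_kernel K1.
Proof. by move=> eK [J [w [u [w_ge0 eK2]]]]; exists J, w, u; split=> // z z'; rewrite eK. Qed.

Lemma psd_kernel_gram (X J : finType) (u : J -> X -> C) :
  psd_kernel (fun z z' => \sum_j u j z * (u j z')^*).
Proof. by exists J, (fun=> 1), u; split=> // z z'; apply: eq_bigr => j _; rewrite mul1r. Qed.

Lemma psd_kernelD (X : finType) (K1 K2 : X -> X -> C) :
  psd_kernel K1 -> psd_kernel K2 -> psd_kernel (fun z z' => K1 z z' + K2 z z').
Proof.
move=> [J1 [w1 [u1 [w1_ge0 eK1]]]] [J2 [w2 [u2 [w2_ge0 eK2]]]].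
exists (J1 + J2)%type, (fun j => match j with inl a => w1 a | inr b => w2 b end),
  (fun j => match j with inl a => u1 a | inr b => u2 b end).
by split=> [[]|z z'] //; rewrite big_sumType eK1 eK2.
Qed.

Lemma psd_kernelZ (X : finType) (c : C) (K : X -> X -> C) :
  0 <= c -> psd_kernel K -> psd_kernel (fun z z' => c * K z z').
Proof.
move=> c_ge0 [J [w [u [w_ge0 eK]]]]; exists J, (fun j => c * w j), u.
split=> [j|z z']; first exact: mulr_ge0.
by rewrite eK mulr_sumr; apply: eq_bigr => j _; rewrite !mulrA.
Qed.

Lemma psd_kernel_rank1 (X : finType) (u : X -> C) : psd_kernel (fun z z' => u z * (u z')^*).
Proof.
apply: (eq_psd_kernel _ (psd_kernel_gram (fun (j : 'I_1) => u))) => z z'.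
by rewrite big_ord1.
Qed.

Lemma psd_kernel_compl (X : finType) (t : X -> C) :
  \sum_z t z * (t z)^* = 1 -> psd_kernel (fun z z' => (z == z')%:R - (t z)^* * t z').
Proof.
move=> t_unit.
apply: (eq_psd_kernel _ (psd_kernel_gram (fun y z => (z == y)%:R - (t z)^* * t y))).
move=> z z' /=.
under eq_bigr do rewrite rmorphB rmorphM /= conjCK rmorph_nat mulrBr !mulrBl.
rewrite !sumrB.
have -> : \sum_i (t z)^* * t i * (z' == i)%:R = (t z)^* * t z'.
  by rewrite -(sum_delta z' (fun i => (t z)^* * t i)); apply: eq_bigr => i _; rewrite mulrC.
have -> : \sum_i (t z)^* * t i * (t z' * (t i)^*) = (t z)^* * t z'.
  by rewrite -[RHS]mulr1 -t_unit mulr_sumr; apply: eq_bigr => i _; ring.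
by rewrite !sum_delta eq_sym; ring.
Qed.

Lemma psd_kernel_tensor_power N (rho : op C N) (n : nat) :
  psd_kernel rho -> psd_kernel (@tensor_power _ _ rho n).
Proof.
move=> [J [w [u [w_ge0 erho]]]].
exists {ffun 'I_n -> J}, (fun f : {ffun 'I_n -> J} => \prod_k w (f k)),
  (fun (f : {ffun 'I_n -> J}) S => \prod_k u (f k) (copy_k S k)).
split=> [f|S S']; first exact: prodr_ge0.
rewrite /tensor_power (eq_bigr _ (fun k _ => erho _ _)) bigA_distr_bigA /=.
by apply: eq_bigr => f _; rewrite rmorph_prod -!big_split.
Qed.

Lemma psd_kernel_sandwich (X Y : finType) (b : X -> Y -> C) (K : Y -> Y -> C) :
  psd_kernel K -> psd_kernel (fun c c' => \sum_S \sum_S' b c S * K S S' * (b c' S')^*).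
Proof.
move=> [J [w [u [w_ge0 eK]]]].
exists J, w, (fun j c => \sum_S b c S * u j S); split=> // c c'.
under eq_bigr => S _.
  under eq_bigr => S' _ do rewrite eK mulr_sumr mulr_suml.
  rewrite exchange_big; over.
rewrite exchange_big; apply: eq_bigr => j _ /=.
rewrite rmorph_sum /= -mulrA mulr_suml mulr_sumr; apply: eq_bigr => S _.
rewrite !mulr_sumr; apply: eq_bigr => S' _; rewrite rmorphM /=; ring.
Qed.

Lemma psd_kernel_slocc_output N (rho : op C N) n (A : local_ops C N n) :
  psd_kernel rho -> psd_kernel (slocc_output rho A).
Proof.
move=> /(psd_kernel_tensor_power n).
move=> /(psd_kernel_sandwich (fun (c : config N) (S : copies_config N n) => \prod_i A i (c i) (S i))).
exact: eq_psd_kernel.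
Qed.

Lemma bessel_inequality (I X : finType) (k : I -> X -> C) (m : C) :
  0 < m -> (forall i j, \sum_z k i z * (k j z)^* = (i == j)%:R * m) ->
  forall Phi : X -> C, \sum_i (\sum_z (k i z)^* * Phi z) * (\sum_z (k i z)^* * Phi z)^*
    <= m * \sum_z Phi z * (Phi z)^*.
Proof.
move=> m_gt0 k_orth Phi.
set c := fun i => \sum_z (k i z)^* * Phi z.
have conj_c i : (c i)^* = \sum_z k i z * (Phi z)^*.
  by rewrite /c rmorph_sum; apply: eq_bigr => z _; rewrite rmorphM /= conjCK.
have m_real : m^* = m by apply: geC0_conj; apply: ltW.
(* expand [0 <= |v|^2] for the residual [v] of [m * Phi] off the span of the [k i] *)
set v := fun z => m * Phi z - \sum_i c i * k i z.
have conj_v z : (v z)^* = m * (Phi z)^* - \sum_i (c i)^* * (k i z)^*.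
  rewrite /v rmorphB rmorphM /= m_real rmorph_sum; congr (_ - _).
  by apply: eq_bigr => i _; rewrite rmorphM /=.
have v_orth i : \sum_z k i z * (v z)^* = 0.
  rewrite (eq_bigr (fun z => m * (k i z * (Phi z)^*) - \sum_j (c j)^* * (k i z * (k j z)^*))); last first.
    move=> z _; rewrite conj_v mulrBr mulr_sumr; congr (_ - _); first by ring.
    by apply: eq_bigr => j _; ring.
  rewrite sumrB -mulr_sumr -conj_c exchange_big /=.
  under eq_bigr do rewrite -mulr_sumr k_orth mulrCA.
  by rewrite sum_delta mulrC subrr.
have v_norm : \sum_z v z * (v z)^* = m * \sum_z Phi z * (v z)^*.
  rewrite mulr_sumr.
  rewrite (eq_bigr (fun z => m * (Phi z * (v z)^*) - \sum_i c i * (k i z * (v z)^*))); last first.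
    move=> z _; rewrite {1}/v mulrBl mulr_suml; congr (_ - _); first by ring.
    by apply: eq_bigr => i _; ring.
  rewrite sumrB exchange_big /=.
  rewrite [X in _ - X]big1 ?subr0 // => i _; by rewrite -mulr_sumr v_orth mulr0.
have v_dot : \sum_z Phi z * (v z)^* = m * \sum_z Phi z * (Phi z)^* - \sum_i c i * (c i)^*.
  rewrite (eq_bigr (fun z => m * (Phi z * (Phi z)^*) - \sum_i (c i)^* * ((k i z)^* * Phi z))); last first.
    move=> z _; rewrite conj_v mulrBr mulr_sumr; congr (_ - _); first by ring.
    by apply: eq_bigr => i _; ring.
  rewrite sumrB -mulr_sumr exchange_big /=; congr (_ - _).
  by apply: eq_bigr => i _; rewrite -mulr_sumr mulrC.
have v_norm_ge0 : 0 <= \sum_z v z * (v z)^*.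
  by apply: sumr_ge0 => z _; apply: mul_conjC_ge0.
by move: v_norm_ge0; rewrite v_norm v_dot pmulr_rge0 // subr_ge0.
Qed.

Lemma sum_swap_le (c : bool -> bool -> C) :
  \sum_a \sum_b c a b * (c b a)^* <= \sum_a \sum_b c a b * (c a b)^*.
Proof.
rewrite -subr_ge0 !big_bool /=.
have -> : forall p q r s : C, p * p^* + q * q^* + (r * r^* + s * s^*)
    - (p * p^* + q * r^* + (r * q^* + s * s^*)) = (q - r) * (q - r)^*.
  by move=> p q r s; rewrite rmorphB /=; ring.
exact: mul_conjC_ge0.
Qed.

End Kernels.

Section PartialTranspose.

Variables (N : nat) (i0 : 'I_N).

Definition upd (T : Type) (z : {ffun 'I_N -> T}) (v : T) : {ffun 'I_N -> T} :=
  [ffun i => if i == i0 then v else z i].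

Lemma upd_same (T : Type) (z : {ffun 'I_N -> T}) v : upd z v i0 = v.
Proof. by rewrite ffunE eqxx. Qed.

Lemma upd_upd (T : Type) (z : {ffun 'I_N -> T}) v w : upd (upd z v) w = upd z w.
Proof. by apply/ffunP=> i; rewrite !ffunE; case: (i == i0). Qed.

Lemma upd_id (T : Type) (z : {ffun 'I_N -> T}) : upd z (z i0) = z.
Proof. by apply/ffunP=> i; rewrite !ffunE; case: eqP => // ->. Qed.

Lemma eq_upd_swap (T : eqType) (z z' : {ffun 'I_N -> T}) :
  (upd z (z' i0) == upd z' (z i0)) = (z == z').
Proof.
apply/eqP/eqP=> [e_upd|->] //; apply/ffunP=> i.
have := congr1 (fun f : {ffun _ -> T} => f i) e_upd; rewrite !ffunE.
by case: eqP => [->|//]; have := congr1 (fun f : {ffun _ -> T} => f i0) e_upd; rewrite !upd_same.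
Qed.

Lemma pair_sum_swap_coord (R : nmodType) (T : finType)
    (F : {ffun 'I_N -> T} -> {ffun 'I_N -> T} -> R) :
  \sum_(z : {ffun 'I_N -> T}) \sum_(z' : {ffun 'I_N -> T}) F z z' =
  \sum_(z : {ffun 'I_N -> T}) \sum_(z' : {ffun 'I_N -> T}) F (upd z (z' i0)) (upd z' (z i0)).
Proof.
rewrite !pair_bigA /=.
pose swap (p : {ffun 'I_N -> T} * {ffun 'I_N -> T}) := (upd p.1 (p.2 i0), upd p.2 (p.1 i0)).
have swapK : involutive swap by case=> z z'; rewrite /swap /= !upd_same !upd_upd !upd_id.
by rewrite (reindex_inj (inv_inj swapK)).
Qed.

Definition ptrans (T R : Type) (K : {ffun 'I_N -> T} -> {ffun 'I_N -> T} -> R)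
  (z z' : {ffun 'I_N -> T}) : R :=
  K (upd z (z' i0)) (upd z' (z i0)).

End PartialTranspose.

Section PptSlocc.

Variables (C : numClosedFieldType) (N : nat) (i0 : 'I_N).

Lemma ptrans_tensor_power (rho : op C N) (n : nat) :
  ptrans i0 (@tensor_power _ _ rho n) =2 @tensor_power _ _ (ptrans i0 rho) n.
Proof.
move=> S S'; apply: eq_bigr => k _.
by congr rho; apply/ffunP=> i; rewrite !ffunE; case: (i == i0); rewrite ?ffunE.
Qed.

Definition conj_at n (A : local_ops C N n) : local_ops C N n :=
  fun i b s => if i == i0 then (A i b s)^* else A i b s.

Lemma prod_upd n (A : local_ops C N n) (c : config N) (S : copies_config N n) v W :
  \prod_i A i (upd i0 c v i) (upd i0 S W i) = A i0 v W * \prod_(i | i != i0) A i (c i) (S i).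
Proof.
rewrite (bigD1 i0) //= !upd_same; congr (_ * _).
by apply: eq_bigr => i /negbTE i_neq0; rewrite !ffunE i_neq0.
Qed.

Lemma prod_conj_at n (A : local_ops C N n) (c : config N) (S : copies_config N n) :
  \prod_i conj_at A i (c i) (S i) = (A i0 (c i0) (S i0))^* * \prod_(i | i != i0) A i (c i) (S i).
Proof.
rewrite (bigD1 i0) //= /conj_at eqxx; congr (_ * _).
by apply: eq_bigr => i /negbTE ->.
Qed.

Lemma ptrans_slocc_output (rho : op C N) n (A : local_ops C N n) :
  ptrans i0 (slocc_output rho A) =2 slocc_output (ptrans i0 rho) (conj_at A).
Proof.
move=> c c'; rewrite /ptrans /slocc_output (pair_sum_swap_coord i0).
apply: eq_bigr => S _; apply: eq_bigr => S' _.
rewrite -ptrans_tensor_power !prod_upd !prod_conj_at.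
by rewrite !rmorphM /= conjCK /ptrans; ring.
Qed.

Lemma psd_ptrans_slocc_output (rho : op C N) n (A : local_ops C N n) :
  psd_kernel (ptrans i0 rho) -> psd_kernel (ptrans i0 (slocc_output rho A)).
Proof.
move=> /(psd_kernel_slocc_output (conj_at A)).
exact: eq_psd_kernel (ptrans_slocc_output rho A).
Qed.

End PptSlocc.

Section PptOverlap.

Variables (C : numClosedFieldType) (N : nat) (i0 : 'I_N) (psi : config N -> C).

(* the expectation of the partially transposed projector [(|psi><psi|)^T_i0] in [Phi] *)
Definition ptrans_proj_form (Phi : config N -> C) : C :=
  \sum_(z : config N) \sum_(z' : config N)
    (psi (upd i0 z (z' i0)))^* * (Phi z * (Phi z')^*) * psi (upd i0 z' (z i0)).

Lemma ppt_overlap_le (sigma : op C N) :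
  psd_kernel (ptrans i0 sigma) ->
  (forall Phi, 2 * ptrans_proj_form Phi <= \sum_z Phi z * (Phi z)^*) ->
  2 * overlap psi sigma <= trace_op sigma.
Proof.
move=> [J [w [u [w_ge0 eK]]]] form_le.
have trace_eq : trace_op sigma = \sum_j w j * \sum_z u j z * (u j z)^*.
  transitivity (\sum_(z : config N) ptrans i0 sigma z z).
    by apply: eq_bigr => z _; rewrite /ptrans upd_id.
  under eq_bigr do rewrite eK.
  rewrite exchange_big; apply: eq_bigr => j _.
  by rewrite mulr_sumr; apply: eq_bigr => z _; rewrite mulrA.
have overlap_eq : overlap psi sigma = \sum_j w j * ptrans_proj_form (u j).
  rewrite /overlap (pair_sum_swap_coord i0).
  transitivity (\sum_(z : config N) \sum_(z' : config N) \sum_j w j *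
    ((psi (upd i0 z (z' i0)))^* * (u j z * (u j z')^*) * psi (upd i0 z' (z i0)))).
    apply: eq_bigr => z _; apply: eq_bigr => z' _.
    move: (eK z z'); rewrite /ptrans => ->.
    by rewrite mulr_sumr mulr_suml; apply: eq_bigr => j _; ring.
  under eq_bigr do rewrite exchange_big.
  rewrite exchange_big; apply: eq_bigr => j _.
  by rewrite mulr_sumr; apply: eq_bigr => z _; rewrite mulr_sumr.
rewrite trace_eq overlap_eq mulr_sumr -subr_ge0 -sumrB; apply: sumr_ge0 => j _.
by rewrite mulrCA -mulrBr mulr_ge0 // subr_ge0.
Qed.

End PptOverlap.

Definition split_amp (C : numClosedFieldType) N (i0 : 'I_N) (psi : config N -> C)
  (a b : bool) (z : config N) : C := (z i0 == a)%:R * psi (upd i0 z b).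

Lemma ptrans_proj_expand (C : numClosedFieldType) N (i0 : 'I_N) (psi : config N -> C)
  (z z' : config N) :
  psi (upd i0 z (z' i0)) * psi (upd i0 z' (z i0)) =
  \sum_a \sum_b split_amp i0 psi a b z * split_amp i0 psi b a z'.
Proof.
rewrite !big_bool /split_amp.
by case: (z i0); case: (z' i0); rewrite /= ?mul1r ?mul0r ?mulr0 ?addr0 ?add0r.
Qed.

Section MaximallyEntangledQubit.

Variables (C : numClosedFieldType) (N : nat) (i0 : 'I_N) (psi : config N -> C).

Hypothesis psi_real : forall z, (psi z)^* = psi z.

(* The reduced state of qubit [i0] is [1/2] times the identity. *)
Hypothesis split_amp_orth : forall p q : bool * bool,
  \sum_z split_amp i0 psi p.1 p.2 z * (split_amp i0 psi q.1 q.2 z)^* = (p == q)%:R / 2.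

Local Notation k := (split_amp i0 psi).

Lemma split_amp_real a b z : (k a b z)^* = k a b z.
Proof. by rewrite /split_amp rmorphM /= rmorph_nat psi_real. Qed.

Lemma ptrans_proj_form_le Phi :
  2 * ptrans_proj_form i0 psi Phi <= \sum_z Phi z * (Phi z)^*.
Proof.
pose c a b := \sum_z k a b z * Phi z.
have form_eq : ptrans_proj_form i0 psi Phi = \sum_a \sum_b c a b * (c b a)^*.
  transitivity (\sum_(z : config N) \sum_(z' : config N) \sum_a \sum_b
      (k a b z * Phi z) * (k b a z' * Phi z')^*).
    apply: eq_bigr => z _; apply: eq_bigr => z' _.
    rewrite psi_real mulrAC ptrans_proj_expand mulr_suml; apply: eq_bigr => a _.
    rewrite mulr_suml; apply: eq_bigr => b _.
    by rewrite rmorphM /= split_amp_real; ring.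
  under eq_bigr => z _.
    rewrite exchange_big; under eq_bigr => a _ do rewrite exchange_big.
    over.
  rewrite exchange_big; apply: eq_bigr => a _.
  rewrite exchange_big; apply: eq_bigr => b _.
  by rewrite rmorph_sum mulr_suml; apply: eq_bigr => z _; rewrite mulr_sumr.
have c_norm : \sum_a \sum_b c a b * (c a b)^* <= 2^-1 * \sum_z Phi z * (Phi z)^*.
  have half_gt0 : (0 : C) < 2^-1 by rewrite invr_gt0 ltr0n.
  move: (@bessel_inequality _ _ _ (fun p => k p.1 p.2) _ half_gt0 split_amp_orth Phi).
  by rewrite pair_bigA; under [X in X <= _]eq_bigr do under eq_bigr do rewrite split_amp_real.
by rewrite form_eq -ler_pdivlMl ?ltr0n //; apply: le_trans (sum_swap_le c) c_norm.
Qed.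

Lemma psd_ptrans_depolarized (x : C) : 0 <= x -> x <= 2 ->
  psd_kernel (ptrans i0 (fun z z' => ((z == z')%:R + x * psi z * (psi z')^*) / (2 ^+ N + x))).
Proof.
move=> x_ge0 x_le2.
(* The partial transpose of the projector is [- t t^T / 2] plus a positive part, for the
   antisymmetric unit vector [t]; when [x <= 2] the identity's component along [t]
   absorbs the negative part. *)
pose t z := k false true z - k true false z.
pose s a b z := k a b z + k b a z.
have t_real z : (t z)^* = t z by rewrite rmorphB /= !split_amp_real.
have s_real a b z : (s a b z)^* = s a b z by rewrite rmorphD /= !split_amp_real.
have t_unit : \sum_z t z * (t z)^* = 1.
  under eq_bigr do rewrite rmorphB mulrBl !mulrBr.
  rewrite !sumrB (split_amp_orth (false, true) (false, true)).
  rewrite (split_amp_orth (false, true) (true, false)) (split_amp_orth (true, false) (false, true)).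
  by rewrite (split_amp_orth (true, false) (true, false)) /=; field.
have proj_eq (z z' : config N) : psi (upd i0 z (z' i0)) * psi (upd i0 z' (z i0)) =
    - 2^-1 * (t z * t z') + 4^-1 * \sum_(p : bool * bool) s p.1 p.2 z * s p.1 p.2 z'.
  rewrite ptrans_proj_expand -(pair_bigA _ (fun a b => s a b z * s a b z')) !big_bool.
  (* generalizing the amplitudes lets [field] identify them as atoms *)
  rewrite /t /s /=.
  by move: (k _ _ z) (k _ _ z) (k _ _ z) (k _ _ z) (k _ _ z') (k _ _ z') (k _ _ z') (k _ _ z') => *; field.
apply: (@eq_psd_kernel _ _ _ (fun z z' => (2 ^+ N + x)^-1 * (((z == z')%:R - (t z)^* * t z')
    + ((1 - x / 2) * (t z * (t z')^*) + x / 4 * \sum_p s p.1 p.2 z * (s p.1 p.2 z')^*)))).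
  move=> z z'; rewrite /ptrans eq_upd_swap psi_real -mulrA proj_eq mulrC.
  under [X in _ = _ * (_ + (_ + _ * X))]eq_bigr do rewrite s_real.
  by rewrite !t_real; congr (_ * _); ring.
apply: psd_kernelZ; first by rewrite invr_ge0 addr_ge0 // exprn_ge0 // ler0n.
apply: psd_kernelD; first exact: psd_kernel_compl.
apply: psd_kernelD; apply: psd_kernelZ.
- by rewrite subr_ge0 ler_pdivrMr ?ltr0n // mul1r.
- exact: psd_kernel_rank1.
- by rewrite divr_ge0 // ler0n.
- exact: psd_kernel_gram.
Qed.

End MaximallyEntangledQubit.

Section GraphState.

Variables (C : numClosedFieldType) (N : nat) (e : rel 'I_N).

Local Notation psi := (graph_state C e).

Lemma graph_state_real z : (psi z)^* = psi z.
Proof.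
by rewrite /graph_state rmorphM fmorphV /= rmorphXn rmorphN1 geC0_conj // sqrtC_ge0
  exprn_ge0 // ler0n.
Qed.

Lemma graph_state_sqr z : psi z * psi z = (2 ^+ N)^-1.
Proof. by rewrite /graph_state mulrACA -expr2 sqrr_sign mul1r -invfM -expr2 sqrtCK. Qed.

Definition flip (z : config N) (j : 'I_N) : config N :=
  [ffun i => if i == j then ~~ z i else z i].

Lemma flipK j : involutive (flip ^~ j).
Proof. by move=> z; apply/ffunP=> i; rewrite !ffunE; case: (i == j); rewrite ?negbK. Qed.

Lemma sum_flip j (F : config N -> C) : \sum_z F z = \sum_z F (flip z j).
Proof. by rewrite (reindex_inj (inv_inj (flipK j))). Qed.

Lemma sum_coord_eq (i : 'I_N) (a : bool) : \sum_(z : config N) (z i == a)%:R = 2 ^+ N / 2 :> C.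
Proof.
have flip_eq : \sum_(z : config N) (z i == a)%:R = \sum_(z : config N) (z i == ~~ a)%:R :> C.
  by rewrite (sum_flip i); apply: eq_bigr => z _; rewrite ffunE eqxx; case: (z i); case: a.
have coord_sum : \sum_(z : config N) ((z i == a)%:R + (z i == ~~ a)%:R) = 2 ^+ N :> C.
  rewrite (eq_bigr (fun=> 1)); last by move=> z _; case: (z i); case: (a); rewrite ?addr0 ?add0r.
  by rewrite sumr_const card_ffun card_bool card_ord -natrX.
by rewrite -coord_sum big_split /= -flip_eq; field.
Qed.

Definition is_edge (p : 'I_N * 'I_N) := (p.1 < p.2)%N && e p.1 p.2.

Lemma edge_count_sign z :
  (-1) ^+ edge_count e z = \prod_(p | is_edge p) (-1) ^+ (z p.1 && z p.2) :> C.
Proof.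
rewrite /edge_count -sum1_card.
rewrite (big_morph (fun n : nat => (-1) ^+ n : C) (fun a b => exprD _ a b) (expr0 _)).
rewrite big_mkcond [RHS]big_mkcond /=; apply: eq_bigr => p _.
by rewrite inE /is_edge; case: (p.1 < p.2)%N; case: (e p.1 p.2); case: (z p.1 && z p.2).
Qed.

Variables (i0 j : 'I_N).
Hypotheses (i0_min : val i0 = 0%N) (e_irr : irreflexive e) (i0j : e i0 j).

(* Since [i0] is the least vertex, the edges at [i0] are the pairs [(i0, j)] with [j] a
   neighbour, so this is [-1] to the number of neighbours of [i0] that are set in [z]. *)
Definition nbr_sign (z : config N) : C :=
  \prod_(p | is_edge p) (if p.1 == i0 then (-1) ^+ (z p.2) else 1).

Lemma graph_state_upd_pair z :
  psi (upd i0 z false) * psi (upd i0 z true) = nbr_sign z / 2 ^+ N.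
Proof.
rewrite /graph_state mulrACA -invfM -expr2 sqrtCK !edge_count_sign -big_split /=.
congr (_ / _); apply: eq_bigr => p /andP [lt_p _].
have p2_neq : p.2 != i0 by apply/eqP=> p2_eq; move: lt_p; rewrite p2_eq i0_min.
rewrite !ffunE (negbTE p2_neq); case: eqP => _ /=; first by rewrite mul1r.
by case: (z p.1 && z p.2); rewrite /= ?mul1r // mulN1r opprK.
Qed.

Lemma nbr_sign_flip z : nbr_sign (flip z j) = - nbr_sign z.
Proof.
have j_neq : j != i0 by apply/eqP=> j_eq; move: i0j; rewrite j_eq e_irr.
have edge_i0j : is_edge (i0, j).
  rewrite /is_edge /= i0j i0_min lt0n andbT; apply: contra _ j_neq => /eqP j0.
  by apply/eqP/val_inj; rewrite /= j0 i0_min.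
rewrite /nbr_sign (bigD1 (i0, j)) //= [in RHS](bigD1 (i0, j)) //= eqxx ffunE eqxx.
have -> : \prod_(p | is_edge p && (p != (i0, j)))
    (if p.1 == i0 then (-1) ^+ (flip z j p.2) else 1) =
    \prod_(p | is_edge p && (p != (i0, j))) (if p.1 == i0 then (-1) ^+ (z p.2) else 1) :> C.
  apply: eq_bigr => [[p1 p2]] /andP [_ p_neq] /=.
  case: eqP => // p1_eq; rewrite ffunE; case: eqP => // p2_eq.
  by move: p_neq; rewrite p1_eq p2_eq eqxx.
by case: (z j); rewrite /= ?mulN1r ?mul1r ?opprK.
Qed.

Lemma sum_graph_state_upd_pair a :
  \sum_(z : config N) (z i0 == a)%:R * (psi (upd i0 z false) * psi (upd i0 z true)) = 0.
Proof.
under eq_bigr do rewrite graph_state_upd_pair.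
set S := \sum_z _.
have S_opp : S = - S.
  rewrite {1}/S (sum_flip j) -sumrN; apply: eq_bigr => z _.
  rewrite nbr_sign_flip ffunE (negbTE (_ : i0 != j)); first by ring.
  by apply/eqP=> i0_eq; move: i0j; rewrite i0_eq e_irr.
have : S * 2 == 0 by rewrite mulr_natr mulr2n {1}S_opp addNr.
by rewrite mulf_eq0 pnatr_eq0 orbF => /eqP.
Qed.

Lemma split_amp_graph_state_orth (p q : bool * bool) :
  \sum_z split_amp i0 psi p.1 p.2 z * (split_amp i0 psi q.1 q.2 z)^* = (p == q)%:R / 2.
Proof.
case: p q => [a b] [c d] /=.
under eq_bigr do rewrite rmorphM /= rmorph_nat graph_state_real mulrACA.
rewrite xpair_eqE; case: (eqVneq a c) => [<-|neq_ac] /=; last first.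
  rewrite mul0r big1 // => z _.
  by case: (eqVneq (z i0) a) => [->|_]; rewrite ?(negbTE neq_ac) /= ?mulr0n ?mulr0 ?mul0r.
under eq_bigr do rewrite -natrM mulnb andbb.
case: (eqVneq b d) => [<-|neq_bd] /=.
  under eq_bigr do rewrite graph_state_sqr.
  by rewrite -mulr_suml sum_coord_eq mulrAC divff ?mul1r // expf_neq0 // pnatr_eq0.
rewrite mul0r; move: neq_bd; case: b; case: d => // _.
  by under eq_bigr do rewrite [psi _ * psi _]mulrC; rewrite sum_graph_state_upd_pair.
exact: sum_graph_state_upd_pair.
Qed.

End GraphState.

Theorem mainTheorem4 (C : numClosedFieldType) (N : nat) (e : rel 'I_N)
  (hN : (2 <= N)%N) (hsym : symmetric e) (hirr : irreflexive e)
  (hconn : forall i j : 'I_N, connect e i j)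
  (x : C) (hx0 : 0 <= x) (hx2 : x <= 2) :
  ~ purifiable (depolarized_graph_state e x) (graph_state C e).
Proof.
have N_gt0 : (0 < N)%N by apply: leq_trans hN.
pose i0 : 'I_N := Ordinal N_gt0.
have i0_min : val i0 = 0%N by [].
have [j i0j] : exists j, e i0 j.
  case/connectP: (hconn i0 (Ordinal hN)) => [[|j p]] /=; first by move=> _ /(congr1 val).
  by case/andP=> i0j _ _; exists j.
have entangled := split_amp_graph_state_orth C i0_min hirr i0j.
move=> /(_ 4^-1) [|n [A [trace_gt0 fid]]]; first by rewrite invr_gt0 ltr0n.
set sigma := slocc_output _ A in trace_gt0 fid.
have bound : 2 * overlap (graph_state C e) sigma <= trace_op sigma.
  apply: ppt_overlap_le (ptrans_proj_form_le (graph_state_real C e) entangled).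
  exact: psd_ptrans_slocc_output (psd_ptrans_depolarized (graph_state_real C e) entangled hx0 hx2).
move: (le_trans (ler_wpM2l (ler0n _ 2) fid) bound).
have -> : 2 * ((1 - 4^-1) * trace_op sigma) = trace_op sigma + trace_op sigma / 2 by field.
have half_gt0 : 0 < trace_op sigma / 2 by rewrite divr_gt0 ?ltr0n.
by rewrite gerDl => /(lt_le_trans half_gt0); rewrite ltxx.
Qed.
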